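(* For all integers $k\geq1$ and $i\geq0$, the class $E(b_k(i))$ belongs to $\mathcal{E}$.
   Context: For $k\geq1$, $i\geq0$ let $b_k(i)$ be the rational number with continued fraction $[5;\{1,4\}^{\times(k-1)},1,2+2i]$, i.e. $[5;1,4,1,4,\dots,1,4,1,2+2i]$ with the pair $1,4$ repeated $k-1$ times. Write $b_k(i)=p/q$ in lowest terms and $d:=\tfrac14(p+q)$. Weight expansion: for rational $a\geq1$ with continued fraction $[l_0;l_1,\dots,l_N]$ ($l_N\geq2$ if $N\geq1$), $w(a)=(1^{\times l_0},x_1^{\times l_1},\dots,x_N^{\times l_N})$ with $x_0=1$, $x_1=a-l_0$, $x_i=x_{i-2}-l_{i-1}x_{i-1}$; $x^{\times l}$ is $x$ repeated $l$ times. The last block of $q\,w(b_k(i))$ is $1^{\times(2+2i)}$. If $i=2j$: let $m$ be $q\,w(b_k(2j))$ with its last block $(1^{\times(4j+2)})$ replaced by $(j+1,j,1^{\times(2j+1)})$, and $E(b_k(2j)):=(d,d;m)$. If $i=2j+1$: let $m$ be $q\,w(b_k(2j+1))$ with its last block $(1^{\times(4j+4)})$ replaced by $((j+1)^{\times2},1^{\times(2j+2)})$, and $E(b_k(2j+1)):=(d+\tfrac12,d-\tfrac12;m)$. The set $\mathcal{E}$: a Cremona transform of an integer tuple $(\delta;n_1,\dots,n_k)$ with $n_1\geq\dots\geq n_k$ is $(2\delta-n_1-n_2-n_3;\delta-n_2-n_3,\delta-n_1-n_3,\delta-n_1-n_2,n_4,\dots,n_k)$; a Cremona move is a Cremona transform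 followed by a permutation of the entries after the semicolon. $\mathcal{E}$ consists of $(0,0;-1)$ together with all integer tuples $(d,e;m_1,\dots,m_M)$ with $d,e\geq0$, $m_1\geq\dots\geq m_M\geq0$, satisfying $\sum m_i=2(d+e)-1$, $\sum m_i^2=2de+1$, and such that $(d+e-m_1;d-m_1,e-m_1,m_2,\dots,m_M)$ reduces to $(0;-1,0,\dots,0)$ by repeated Cremona moves. *)

From HB Require Import structures.
From mathcomp Require Import all_boot all_order all_algebra.
From Stdlib Require Import Relations.
Set Implicit Arguments. Unset Strict Implicit. Unset Printing Implicit Defensive.
Import Order.TTheory GRing.Theory Num.Theory.
Local Open Scope ring_scope.

Fixpoint cf_val (l : seq nat) : rat :=
  match l with
  | [::] => 0
  | [:: a] => a%:R
  | a :: s => a%:R + (cf_val s)^-1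
  end.

Definition bseq (k i : nat) : seq nat :=
  5%N :: flatten (nseq k.-1 [:: 1%N; 4%N]) ++ [:: 1%N; (2 + 2 * i)%N].

Definition bki (k i : nat) : rat := cf_val (bseq k i).

Definition pk (k i : nat) : int := numq (bki k i).
Definition qk (k i : nat) : int := denq (bki k i).
Definition dk (k i : nat) : rat := ((pk k i + qk k i)%:~R) / 4.

(* (x_n, x_{n+1}) for the weight expansion of a with CF l:
   x_0 = 1, x_1 = a - l_0, x_{n+2} = x_n - l_{n+1} x_{n+1}. *)
Fixpoint xpair (a : rat) (l : seq nat) (n : nat) : rat * rat :=
  match n with
  | O => (1, a - (nth 0%N l 0)%:R)
  | S n' => let: (u, v) := xpair a l n' in (v, u - (nth 0%N l n)%:R * v)
  end.

Definition xw (a : rat) (l : seq nat) (n : nat) : rat := (xpair a l n).1.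

Definition weights (a : rat) (l : seq nat) : seq rat :=
  flatten [seq nseq (nth 0%N l j) (xw a l j) | j <- iota 0 (size l)].

Definition qw (k i : nat) : seq rat :=
  [seq (qk k i)%:~R * y | y <- weights (bki k i) (bseq k i)].

Definition Eclass (k i : nat) : rat * rat * seq rat :=
  let s := qw k i in
  let j := i./2 in
  let front := take (size s - (2 + 2 * i))%N s in
  if ~~ odd i then
    (dk k i, dk k i,
     front ++ [:: (j.+1)%:R; j%:R] ++ nseq (2 * j + 1)%N 1)
  else
    (dk k i + 1/2, dk k i - 1/2,
     front ++ nseq 2 (j.+1)%:R ++ nseq (2 * j + 2)%N 1).

(* Cremona transform of (delta; n1, ..., nk), n1 >= ... >= nk, k >= 3. *)
Definition cremona (delta : int) (n : seq int) : int * seq int :=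
  let n1 := nth 0 n 0 in let n2 := nth 0 n 1 in let n3 := nth 0 n 2 in
  (2 * delta - n1 - n2 - n3,
   [:: delta - n2 - n3; delta - n1 - n3; delta - n1 - n2] ++ drop 3 n).

Definition cremona_move (t t' : int * seq int) : Prop :=
  exists s : seq int,
    [/\ perm_eq s t.2, sorted (fun x y : int => y <= x) s, (3 <= size s)%N
      & (t'.1 = (cremona t.1 s).1 /\ perm_eq t'.2 (cremona t.1 s).2)].

Definition reduces_to_E0 (t : int * seq int) : Prop :=
  exists t' : int * seq int,
    clos_refl_trans _ cremona_move t t' /\
    t'.1 = 0 /\ t'.2 = -1 :: nseq (size t'.2).-1 0.

Definition in_calE (d e : int) (m : seq int) : Prop :=
  (d = 0 /\ e = 0 /\ m = [:: -1]) \/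
  (0 <= d /\ 0 <= e /\ sorted (fun x y : int => y <= x) m /\
   all (fun x : int => 0 <= x) m /\
   \sum_(x <- m) x = 2 * (d + e) - 1 /\
   \sum_(x <- m) x ^+ 2 = 2 * d * e + 1 /\
   (exists (m1 : int) (mr : seq int), m = m1 :: mr /\
      reduces_to_E0 (d + e - m1, [:: d - m1, e - m1 & mr]))).

(* The continued fraction of b_(n+1)(i) is driven by the recursion
   (a, h) -> (5a + 2h, 2a + h) started at (2i + 3, i + 1): for b_(n+1)(i) = p/q
   one has q = a and p = 5a + 2h, and q w(b_(n+1)(i)) consists of a (five times),
   2h, the weights of level n, and finally 1^(2+2i).  Once the largest entry a
   is split off, four Cremona moves bring a class of this shape at level
   (a, h) to one of the same shape at the level below, so everything reduces
   to level 0, where the modified last block is disposed of by a chain of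
   moves ending at (0; -1).  The two numerical conditions of E hold because
   they are the values at (0; -1) of the Cremona invariants. *)

From Pilot Require Import Defs.
From HB Require Import structures.
From mathcomp Require Import all_boot all_order all_algebra.
From mathcomp Require Import zify ring lra.
From Stdlib Require Import Relations.
Import Order.TTheory GRing.Theory Num.Theory.
Local Open Scope ring_scope.

Definition ge_int : rel int := fun x y => y <= x.

Lemma ge_int_total : total ge_int.
Proof. by move=> x y; rewrite /ge_int le_total. Qed.

Lemma ge_int_trans : ssrbool.transitive ge_int.
Proof. by move=> y x z /[swap]; apply: le_trans. Qed.

Lemma all_le_trans (r r' : int) (s : seq int) :
  r <= r' -> all (fun y => y <= r) s -> all (fun y => y <= r') s.
Proof. by move=> le_r; apply: sub_all => y /= /le_trans; apply. Qed.

Lemma reduces_by_cremona (d x1 x2 x3 d' y1 y2 y3 : int) (o l l' : seq int) :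
  perm_eq l [:: x1, x2, x3 & o] -> x2 <= x1 -> x3 <= x2 ->
  all (fun y => y <= x3) o ->
  d' = 2 * d - x1 - x2 - x3 -> y1 = d - x2 - x3 -> y2 = d - x1 - x3 ->
  y3 = d - x1 - x2 -> perm_eq l' [:: y1, y2, y3 & o] ->
  reduces_to_E0 (d', l') -> reduces_to_E0 (d, l).
Proof.
move=> perm_l le21 le32 o_le d'_eq -> -> -> perm_l' [t [red_t t_E0]].
exists t; split=> //; apply: rt_trans red_t; apply: rt_step.
exists [:: x1, x2, x3 & sort ge_int o]; split=> //=.
- by rewrite perm_sym (permPl perm_l) !perm_cons perm_sym perm_sort.
- rewrite le21 le32 /= path_min_sorted ?all_sort //.
  exact: (sort_sorted ge_int_total).
- rewrite /cremona /= drop0; split=> //.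
  by rewrite (permPl perm_l') !perm_cons perm_sym perm_sort.
Qed.

Lemma reduces_to_E0_base n : reduces_to_E0 (0, -1 :: nseq n 0).
Proof.
by exists (0, -1 :: nseq n 0); split; [exact: rt_refl | rewrite /= size_nseq].
Qed.

Definition c1_pairing (t : int * seq int) : int := 3 * t.1 - \sum_(x <- t.2) x.
Definition self_intersection (t : int * seq int) : int :=
  t.1 ^+ 2 - \sum_(x <- t.2) x ^+ 2.

Lemma cremona_move_invariant t t' : cremona_move t t' ->
  c1_pairing t' = c1_pairing t /\ self_intersection t' = self_intersection t.
Proof.
case=> s [Hs _ Hsz [Ht'1 Ht'2]].
rewrite /c1_pairing /self_intersection Ht'1 !(perm_big _ Ht'2) -!(perm_big _ Hs).
case: s {Hs Ht'2 Ht'1} Hsz => [|n1 [|n2 [|n3 r]]] //= _.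
by rewrite /cremona /= drop0 !big_cons; split; ring.
Qed.

Lemma reduces_to_E0_invariant t : reduces_to_E0 t ->
  c1_pairing t = 1 /\ self_intersection t = -1.
Proof.
case=> t' [Htt' [Ht'1 Ht'2]].
have [<- <-] : c1_pairing t' = c1_pairing t /\
               self_intersection t' = self_intersection t.
  elim: Htt' => [x y /cremona_move_invariant // | // |].
  by move=> x y z _ [-> ->] _ [-> ->].
rewrite /c1_pairing /self_intersection Ht'1 Ht'2 !big_cons.
by rewrite !big_nseq !iter_fix // expr0n addr0.
Qed.

Lemma in_calE_sort (d e x : int) (m : seq int) :
  0 <= d -> 0 <= e -> all (fun y => 0 <= y) m -> all (fun y => y <= x) m ->
  x \in m ->
  (forall mr, perm_eq m (x :: mr) ->
     reduces_to_E0 (d + e - x, [:: d - x, e - x & mr])) ->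
  in_calE d e (sort ge_int m).
Proof.
move=> d_ge0 e_ge0 m_ge0 m_lex xm red; right.
have sorted_m : sorted ge_int (sort ge_int m) := sort_sorted ge_int_total m.
have perm_m : perm_eq (sort ge_int m) m by rewrite perm_sort.
case Em: (sort ge_int m) sorted_m perm_m => [|x' mr] sorted_m perm_m.
  by move: xm; rewrite -(perm_mem perm_m).
have Ex' : x' = x.
  apply/eqP; rewrite eq_le; apply/andP; split.
    by move/allP: m_lex; apply; rewrite -(perm_mem perm_m) mem_head.
  move: xm; rewrite -(perm_mem perm_m) in_cons => /predU1P[-> //|xmr].
  by move/allP: (order_path_min ge_int_trans sorted_m); apply.
subst x'.
have red_mr := red mr ltac:(by rewrite perm_sym).
have [] := reduces_to_E0_invariant _ red_mr.
rewrite /c1_pairing /self_intersection /= !big_cons => c1 self.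
do 3 (split=> //); split; first by move: m_ge0; rewrite -(perm_all _ perm_m).
split; first lia.
split; last by exists x, mr.
set S := \sum_(y <- mr) y ^+ 2 in self *; nia.
Qed.

(* [la i n] and [2 * lh i n] are [q] and [p - 5 q] for [b_(n+1)(i) = p / q]. *)
Fixpoint level (i n : nat) : int * int :=
  if n is n'.+1 then
    let p := level i n' in (5 * p.1 + 2 * p.2, 2 * p.1 + p.2)
  else ((2 * i + 3)%N%:Z, (i + 1)%N%:Z).
Definition la i n := (level i n).1.
Definition lh i n := (level i n).2.

Lemma la0 i : la i 0 = (2 * i + 3)%N. Proof. by []. Qed.
Lemma lh0 i : lh i 0 = (i + 1)%N. Proof. by []. Qed.
Lemma laS i n : la i n.+1 = 5 * la i n + 2 * lh i n. Proof. by []. Qed.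
Lemma lhS i n : lh i n.+1 = 2 * la i n + lh i n. Proof. by []. Qed.

Lemma level_bounds i n : 1 <= lh i n /\ 2 * lh i n + 1 <= la i n.
Proof.
elim: n => [|n [h_ge1 a_gt]]; first by rewrite la0 lh0; lia.
by rewrite laS lhS; lia.
Qed.

Lemma level_gt0 i n : 0 < (la i n)%:~R :> rat /\ 0 < (lh i n)%:~R :> rat.
Proof. by have := level_bounds i n; rewrite !ltr0z; lia. Qed.

Lemma level_coprime i n : coprimez (5 * la i n + 2 * lh i n) (la i n).
Proof.
apply/coprimezP.
elim: n => [|n [[u v] /= Huv]]; first by exists (-1, 6); rewrite la0 lh0 /=; lia.
exists (- v, u + 6 * v) => /=.
by rewrite -[RHS]Huv laS lhS; ring.
Qed.

Fixpoint cf_tail (i n : nat) : seq nat :=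
  if n is n'.+1 then 1%N :: 4%N :: cf_tail i n' else [:: 1%N; (2 + 2 * i)%N].

Lemma bseq_level i n : Defs.bseq n.+1 i = 5%N :: cf_tail i n.
Proof. by rewrite /Defs.bseq; congr (_ :: _); elim: n => //= n ->. Qed.

Lemma size_cf_tail i n : size (cf_tail i n) = (2 * n + 2)%N.
Proof. by elim: n => //= n ->; lia. Qed.

Lemma cf_val_cons a s : s != [::] -> cf_val (a :: s) = a%:R + (cf_val s)^-1.
Proof. by case: s. Qed.

Lemma cf_tail_neq0 i n : cf_tail i n != [::]. Proof. by case: n. Qed.

Lemma cf_val_tail i n : cf_val (cf_tail i n) = (la i n)%:~R / (2 * lh i n)%:~R.
Proof.
elim: n => [|n IH].
  rewrite /= la0 lh0 intrM -!pmulrn.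
  have : (0 : rat) <= i%:R by rewrite ler0n.
  by move=> ?; field; apply/andP; split; apply/eqP; lra.
rewrite [cf_tail i n.+1]/= cf_val_cons // cf_val_cons ?cf_tail_neq0 // IH laS lhS.
have [a_gt0 h_gt0] := level_gt0 i n; rewrite !(intrD, intrM).
move: (la i n)%:~R (lh i n)%:~R a_gt0 h_gt0 => a h ? ?.
by field; repeat (apply/andP; split); apply/eqP; lra.
Qed.

Lemma bki_level i n : bki n.+1 i = (5 * la i n + 2 * lh i n)%:~R / (la i n)%:~R.
Proof.
rewrite /bki bseq_level cf_val_cons ?cf_tail_neq0 // cf_val_tail.
have [a_gt0 h_gt0] := level_gt0 i n; rewrite !(intrD, intrM).
move: (la i n)%:~R (lh i n)%:~R a_gt0 h_gt0 => a h ? ?.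
by field; repeat (apply/andP; split); apply/eqP; lra.
Qed.

Lemma pk_level i n : pk n.+1 i = 5 * la i n + 2 * lh i n.
Proof.
have := level_bounds i n => -[h_ge1 a_gt].
rewrite /pk bki_level coprimeq_num; last exact: level_coprime.
by rewrite gtr0_sg ?mul1r //; lia.
Qed.

Lemma qk_level i n : qk n.+1 i = la i n.
Proof.
have := level_bounds i n => -[h_ge1 a_gt].
rewrite /qk bki_level coprimeq_den; last exact: level_coprime.
by case: eqP => [|_]; [lia | rewrite gtr0_norm //; lia].
Qed.

(* The remainders of the Euclidean algorithm on [(q, p - 5 q)]; the [j]-th one
   is [q * x_j]. *)
Fixpoint remainders (i n : nat) : seq int :=
  if n is n'.+1 then la i n :: 2 * lh i n :: remainders i n'
  else [:: la i 0; 2 * lh i 0; 1; 0].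

Lemma size_remainders i n : size (remainders i n) = (2 * n + 4)%N.
Proof. by elim: n => //= n ->; lia. Qed.

Lemma remainders_rec i n m : (m < 2 * n + 2)%N ->
  nth 0 (remainders i n) m =
  (nth 0%N (cf_tail i n) m)%:Z * nth 0 (remainders i n) m.+1
    + nth 0 (remainders i n) m.+2.
Proof.
elim: n m => [|n IH] [|[|m]] //= m_lt; rewrite ?la0 ?lh0 ?laS ?lhS; try lia.
- by case: n {IH m_lt} => [|n] /=; rewrite ?la0 ?lh0 ?laS ?lhS; lia.
- by case: n {IH m_lt} => [|n] /=; rewrite ?la0 ?lh0 ?laS ?lhS; lia.
- by apply: IH; lia.
Qed.

Lemma xpair_eq (a : rat) (l : seq nat) (y : nat -> rat) (N : nat) :
  y 0%N = 1 -> y 1%N = a - (nth 0%N l 0)%:R ->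
  (forall m, (m < N)%N -> y m.+2 = y m - (nth 0%N l m.+1)%:R * y m.+1) ->
  forall m, (m <= N)%N -> xpair a l m = (y m, y m.+1).
Proof.
move=> y0 y1 y_rec; elim=> [|m IH] m_le /=; first by rewrite y0 y1.
by rewrite IH ?(ltnW m_le) //= y_rec.
Qed.

Lemma xw_level i n j : (j <= 2 * n + 2)%N ->
  xw (bki n.+1 i) (Defs.bseq n.+1 i) j =
  (nth 0 (remainders i n) j)%:~R / (la i n)%:~R.
Proof.
have [a_gt0 h_gt0] := level_gt0 i n.
have rem0 : nth 0 (remainders i n) 0 = la i n by case: n {a_gt0 h_gt0}.
have rem1 : nth 0 (remainders i n) 1 = 2 * lh i n by case: n {a_gt0 h_gt0 rem0}.
move=> j_le; rewrite /xw (@xpair_eq _ _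
  (fun m => (nth 0 (remainders i n) m)%:~R / (la i n)%:~R) (2 * n + 2)) //.
- by rewrite rem0 divff // gt_eqF.
- rewrite rem1 bseq_level bki_level /= !(intrD, intrM).
  move: (la i n)%:~R (lh i n)%:~R a_gt0 h_gt0 => a h ? ?.
  by field; apply/eqP; lra.
move=> m m_lt; rewrite bseq_level (@remainders_rec i n m m_lt) /=.
rewrite intrD intrM -pmulrn.
by field; apply/eqP; lra.
Qed.

Definition blocks (l : seq nat) (s : seq int) : seq int :=
  flatten [seq nseq p.1 p.2 | p <- zip l s].

Lemma map_iota_zip (T1 T2 T3 : Type) (x1 : T1) (x2 : T2) (f : T1 -> T2 -> T3)
    (l1 : seq T1) (l2 : seq T2) : (size l1 <= size l2)%N ->
  [seq f (nth x1 l1 j) (nth x2 l2 j) | j <- iota 0 (size l1)] =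
  [seq f p.1 p.2 | p <- zip l1 l2].
Proof.
elim: l1 l2 => [|a l1 IH] [|b l2] //= le_size; congr (_ :: _).
by rewrite -IH // -[1%N]addn0 iotaDl -map_comp.
Qed.

Fixpoint qw_middle (i n : nat) : seq int :=
  if n is n'.+1 then nseq 4 (la i n') ++ 2 * lh i n' :: qw_middle i n' else [::].

Lemma blocks_level i n c : blocks (c :: cf_tail i n) (remainders i n) =
  nseq c (la i n) ++ 2 * lh i n :: qw_middle i n ++ nseq (2 + 2 * i) 1.
Proof.
elim: n c => [|n IH] c; first by rewrite /blocks /= cats0.
by rewrite [cf_tail _ _]/= [remainders _ _]/= /blocks /= -/(blocks _ _) IH.
Qed.

Lemma qw_level i n : qw n.+1 i =
  [seq x%:~R | x <- nseq 5 (la i n) ++ 2 * lh i n :: qw_middle i n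
                      ++ nseq (2 + 2 * i) 1].
Proof.
have [a_gt0 _] := level_gt0 i n.
rewrite /qw /weights qk_level -(blocks_level i n 5) /blocks -bseq_level.
rewrite !map_flatten -!map_comp.
rewrite -(@map_iota_zip _ _ _ 0%N 0
           (fun c y => [seq (x%:~R : rat) | x <- nseq c y])); last first.
  by rewrite bseq_level /= size_cf_tail size_remainders; lia.
congr flatten; apply/eq_in_map => j; rewrite mem_iota => /andP[_ j_lt] /=.
rewrite !map_nseq xw_level; last first.
  by move: j_lt; rewrite bseq_level /= size_cf_tail; lia.
by rewrite mulrC divfK ?gt_eqF.
Qed.

Definition last_block_even (j : nat) : seq int :=
  [:: (j.+1)%:Z; j%:Z] ++ nseq (2 * j + 1) 1.
Definition last_block_odd (j : nat) : seq int :=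
  nseq 2 (j.+1)%:Z ++ nseq (2 * j + 2) 1.
Definition last_block (i : nat) : seq int :=
  if odd i then last_block_odd i./2 else last_block_even i./2.

Definition lower_weights (i n : nat) : seq int := qw_middle i n ++ last_block i.
Arguments lower_weights : simpl never.

Lemma lower_weights0 i : lower_weights i 0 = last_block i.
Proof. by []. Qed.

Lemma lower_weightsS i n :
  lower_weights i n.+1 = nseq 4 (la i n) ++ 2 * lh i n :: lower_weights i n.
Proof. by []. Qed.

Definition Eclass_weights (i n : nat) : seq int :=
  nseq 5 (la i n) ++ 2 * lh i n :: lower_weights i n.

Lemma Eclass_level i n (D : int) : 3 * la i n + lh i n = 2 * D + odd i ->
  Eclass n.+1 i =
  ((D + odd i)%:~R, D%:~R, [seq x%:~R | x <- Eclass_weights i n]).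
Proof.
move=> HD; have dkE : dk n.+1 i = D%:~R + (odd i)%:R / 2.
  rewrite /dk pk_level qk_level.
  have -> : 5 * la i n + 2 * lh i n + la i n = 4 * D + 2 * (odd i)%:Z by lia.
  by rewrite !(intrD, intrM) -pmulrn; field.
rewrite /Eclass qw_level -cat_cons (catA (nseq 5 _)) map_cat size_cat.
rewrite map_nseq size_nseq addnK take_size_cat ?size_map // dkE.
rewrite /Eclass_weights /lower_weights /last_block -cat_cons (catA (nseq 5 _)).
rewrite map_cat; case: (odd i); rewrite /= ?addr0 ?subr0; congr (_, _, _);
  rewrite ?intrD; try by field.
all: rewrite map_cat /last_block_odd /last_block_even map_cat !map_nseq /=.
all: by rewrite -!pmulrn.
Qed.

Lemma level_parity i n :
  exists2 D : int, 3 * la i n + lh i n = 2 * D + odd i & 0 <= D.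
Proof.
have i_eq : i = (odd i + 2 * i./2)%N by rewrite -[LHS]odd_double_half mul2n.
elim: n => [|n [D HD D_ge0]].
  by exists (7 * i./2 + 5 + 3 * odd i)%N; rewrite ?la0 ?lh0; lia.
have [h_ge1 a_gt] := level_bounds i n.
by exists (D + 7 * la i n + 3 * lh i n); rewrite ?laS ?lhS; lia.
Qed.

(* Decides [perm_eq] between explicit lists by comparing multiplicities with
   [lia], each equality test being an opaque atom. *)
Ltac perm_by_count :=
  rewrite /=; apply/permP => ?;
  rewrite /= ?count_cat /= ?count_cat /= ?count_nseq;
  repeat match goal with |- context [nat_of_bool ?b] =>
    let c := fresh "c" in set c := nat_of_bool b; clearbody c end;
  lia.

Lemma all_nseq_le (n : nat) (x y : int) :
  x <= y -> all (fun z => z <= y) (nseq n x).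
Proof. by move=> le_xy; rewrite all_nseq le_xy orbT. Qed.

Lemma reduces_ones_tail (t z : nat) (l : seq int) :
  perm_eq l (t%:Z :: nseq (2 * t + 2) 1 ++ nseq z 0) ->
  reduces_to_E0 ((t.+1)%:Z, l).
Proof.
elim: t z l => [|t IH] z l perm_l.
  apply: (@reduces_by_cremona _ 1 1 0 0 0 0 (-1) (nseq z 0) _
            (-1 :: nseq z.+2 0)); rewrite ?all_nseq_le //; try perm_by_count.
  - by rewrite (permPl perm_l); perm_by_count.
  - exact: reduces_to_E0_base.
apply: (@reduces_by_cremona _ t.+1%:Z 1 1 t.+1%:Z t%:Z 0 0
          (nseq (2 * t + 2) 1 ++ nseq z 0) _
          (t%:Z :: nseq (2 * t + 2) 1 ++ nseq z.+2 0)); try lia.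
- by rewrite (permPl perm_l); perm_by_count.
- by rewrite all_cat !all_nseq_le.
- by perm_by_count.
- exact: IH.
Qed.

Lemma reduces_last_block_even (j z : nat) (l : seq int) :
  perm_eq l ([:: j%:Z; j%:Z] ++ last_block_even j ++ nseq z 0) ->
  reduces_to_E0 ((2 * j + 1)%N%:Z, l).
Proof.
rewrite /last_block_even; case: j => [|j] perm_l.
  by apply: (reduces_ones_tail 0 z.+2); rewrite (permPl perm_l); perm_by_count.
apply: (@reduces_by_cremona _ j.+2%:Z j.+1%:Z j.+1%:Z j.+2%:Z 1 0 0
          (j.+1%:Z :: nseq (2 * j.+1 + 1) 1 ++ nseq z 0) _
          (j.+1%:Z :: nseq (2 * j.+1 + 2) 1 ++ nseq z.+2 0)); try lia.
- by rewrite (permPl perm_l); perm_by_count.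
- by rewrite /= all_cat !all_nseq_le //=; lia.
- by perm_by_count.
- exact: reduces_ones_tail.
Qed.

Lemma reduces_last_block_odd (j z : nat) (l : seq int) :
  perm_eq l ([:: j.+1%:Z; j%:Z] ++ last_block_odd j ++ nseq z 0) ->
  reduces_to_E0 ((2 * j + 2)%N%:Z, l).
Proof.
rewrite /last_block_odd => perm_l.
apply: (@reduces_by_cremona _ j.+1%:Z j.+1%:Z j.+1%:Z j.+1%:Z 0 0 0
          (j%:Z :: nseq (2 * j + 2) 1 ++ nseq z 0) _
          (j%:Z :: nseq (2 * j + 2) 1 ++ nseq z.+3 0)); try lia.
- by rewrite (permPl perm_l); perm_by_count.
- by rewrite /= all_cat !all_nseq_le //=; lia.
- by perm_by_count.
- exact: reduces_ones_tail.
Qed.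

(* Four Cremona moves taking level [(A, h)] one level down. *)
Lemma reduces_four_moves (A h X Y : int) (W l : seq int) :
  1 <= h -> 2 * h <= A <= 3 * h -> X + Y = A + h -> Y <= X <= Y + 1 ->
  all (fun y => y <= A - X) W ->
  perm_eq l ([:: A; A; A; A; 2 * h; X; Y] ++ W) ->
  reduces_to_E0 (h, [:: Y + 2 * X - 2 * A; 2 * h - X; 0; 0; 0; 0; 0] ++ W) ->
  reduces_to_E0 (2 * A + h, l).
Proof.
move=> h_ge1 /andP[A_ge A_le] XY /andP[le_YX le_XY] W_le perm_l red.
have W_le' r : A - X <= r -> all (fun y => y <= r) W.
  by move=> le_r; apply: all_le_trans W_le.
apply: (@reduces_by_cremona _ A A A (A + 2 * h) h h h ([:: A; 2 * h; X; Y] ++ W) _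
          ([:: A; 2 * h; X; Y; h; h; h] ++ W)); try lia.
- by rewrite (permPl perm_l); perm_by_count.
- by rewrite /= W_le' ?andbT; lia.
- by perm_by_count.
apply: (@reduces_by_cremona _ A (2 * h) X (A + 2 * h - X) (A - X) (2 * h - X) 0
          ([:: Y; h; h; h] ++ W) _ ([:: Y; h; h; h; A - X; 2 * h - X; 0] ++ W));
  try lia.
- by perm_by_count.
- by rewrite /= W_le' ?andbT; lia.
- by perm_by_count.
apply: (@reduces_by_cremona _ Y h h Y (A - X) 0 0
          ([:: h; A - X; 2 * h - X; 0] ++ W) _
          ([:: h; A - X; A - X; 0; 0; 2 * h - X; 0] ++ W)); try lia.
- by perm_by_count.
- by rewrite /= W_le' ?andbT; lia.
- by perm_by_count.
apply: (@reduces_by_cremona _ h (A - X) (A - X) h (Y + 2 * X - 2 * A) 0 0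
          ([:: 0; 0; 2 * h - X; 0] ++ W) _ _ _ _ _ _ _ _ _ _ _ red); try lia.
- by perm_by_count.
- by rewrite /= W_le' ?andbT; lia.
- by perm_by_count.
Qed.

Lemma last_block_le i : all (fun y => y <= i./2.+1%:Z) (last_block i).
Proof.
by rewrite /last_block /last_block_odd /last_block_even;
  case: (odd i); rewrite /= ?all_cat !all_nseq_le //=; lia.
Qed.

Lemma lower_weights_ge0 i n : all (fun y => 0 <= y) (lower_weights i n).
Proof.
elim: n => [|n IH].
  by rewrite lower_weights0 /last_block /last_block_odd /last_block_even;
    case: (odd i); rewrite /= ?all_cat !all_nseq /= ?orbT.
have [h_ge1 a_gt] := level_bounds i n.
by rewrite lower_weightsS all_cat all_nseq /= IH !andbT; lia.
Qed.

Lemma lower_weightsS_le i n : all (fun y => y <= la i n) (lower_weights i n.+1).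
Proof.
elim: n => [|n IH]; rewrite lower_weightsS all_cat all_nseq_le //=.
  have [h_ge1 a_gt] := level_bounds i 0; apply/andP; split; first lia.
  by apply: all_le_trans (last_block_le i); rewrite la0; lia.
have [h_ge1 a_gt] := level_bounds i n; have [h'_ge1 a'_gt] := level_bounds i n.+1.
apply/andP; split; first lia.
by apply: all_le_trans IH; rewrite laS; lia.
Qed.

Lemma reduces_level i n (X Y : int) (z : nat) (l : seq int) :
  X + Y = la i n + lh i n -> Y <= X <= Y + 1 ->
  perm_eq l ([:: la i n; la i n; la i n; la i n; 2 * lh i n; X; Y]
               ++ lower_weights i n ++ nseq z 0) ->
  reduces_to_E0 (2 * la i n + lh i n, l).
Proof.
elim: n X Y z l => [|n IH] X Y z l XY XY_le perm_l.
  have i_eq : i = (odd i + 2 * i./2)%N by rewrite -[LHS]odd_double_half mul2n.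
  move: XY perm_l; rewrite la0 lh0 lower_weights0 => XY perm_l.
  apply: reduces_four_moves perm_l _; rewrite ?all_cat ?all_nseq_le //; try lia.
    by rewrite andbT; apply: all_le_trans (last_block_le i); lia.
  move: (last_block_le i); rewrite /last_block; case: (odd i) i_eq => /= i_eq _.
  - have -> : (i + 1)%N%:Z = (2 * i./2 + 2)%N by lia.
    apply: (reduces_last_block_odd _ (z + 5)).
    rewrite (_ : _ - _ = i./2.+1%:Z); last lia.
    by rewrite (_ : _ - X = i./2%:Z); [perm_by_count | lia].
  - have -> : (i + 1)%N%:Z = (2 * i./2 + 1)%N by lia.
    apply: (reduces_last_block_even _ (z + 5)).
    rewrite (_ : _ - _ = i./2%:Z); last lia.
    by rewrite (_ : _ - X = i./2%:Z); [perm_by_count | lia].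
have [h_ge1 a_gt] := level_bounds i n; have [h'_ge1 a'_gt] := level_bounds i n.+1.
have a'_eq := laS i n; have h'_eq := lhS i n.
apply: reduces_four_moves perm_l _; try lia.
  rewrite all_cat all_nseq_le ?andbT; last lia.
  by apply: all_le_trans (lower_weightsS_le i n); lia.
rewrite h'_eq.
apply: (IH (Y + 2 * X - 2 * la i n.+1) (2 * lh i n.+1 - X) (z + 5)).
- lia.
- lia.
- by rewrite lower_weightsS; perm_by_count.
Qed.

Lemma lower_weights_le i n : all (fun y => y <= la i n) (lower_weights i n).
Proof.
case: n => [|n].
  by apply: all_le_trans (last_block_le i); rewrite la0; lia.
have [h_ge1 a_gt] := level_bounds i n.
by apply: all_le_trans (lower_weightsS_le i n); rewrite laS; lia.
Qed.

Lemma Eclass_weights_in_calE i n (D : int) :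
  3 * la i n + lh i n = 2 * D + odd i -> 0 <= D ->
  in_calE (D + odd i) D (sort ge_int (Eclass_weights i n)).
Proof.
move=> HD D_ge0; have [h_ge1 a_gt] := level_bounds i n.
apply: (@in_calE_sort _ _ (la i n));
  rewrite /Eclass_weights ?all_cat ?mem_cat ?mem_nseq //=; try lia.
- by rewrite lower_weights_ge0 !andbT; lia.
- by rewrite lower_weights_le !andbT; lia.
move=> mr; rewrite perm_cons => perm_mr.
rewrite (_ : _ - _ = 2 * la i n + lh i n); last lia.
apply: (@reduces_level _ _ (D + odd i - la i n) (D - la i n) 0); try lia.
have perm_l : perm_eq [:: D + odd i - la i n, D - la i n & mr]
    [:: D + odd i - la i n, D - la i n, la i n, la i n, la i n, la i n,
        2 * lh i n & lower_weights i n] by rewrite !perm_cons perm_sym.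
by rewrite (permPl perm_l); perm_by_count.
Qed.

Theorem proposition6p18 (k i : nat) : (1 <= k)%N ->
  exists (d e : int) (m m' : seq int),
    Eclass k i = (d%:~R, e%:~R, [seq x%:~R | x <- m]) /\
    perm_eq m m' /\ in_calE d e m'.
Proof.
case: k => // n _; have [D HD D_ge0] := level_parity i n.
exists (D + odd i), D, (Eclass_weights i n), (sort ge_int (Eclass_weights i n)).
split; first exact: Eclass_level.
by split; [rewrite perm_sym perm_sort | exact: Eclass_weights_in_calE].
Qed.
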